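(* For every instance, $$\mathrm{opt}\text{-}\mathrm{SUM}\le \mathrm{opt}_M\text{-}\mathrm{SUM}\le 2\,\mathrm{opt}\text{-}\mathrm{SUM}\qquad\text{and}\qquad \mathrm{opt}\text{-}\mathrm{MAX}\le \mathrm{opt}_M\text{-}\mathrm{MAX}\le 2\,\mathrm{opt}\text{-}\mathrm{MAX}.$$
   Context: An instance consists of a finite set $E$ of elements with nonnegative weights $(p_e)_{e\in E}$ (normalized $\sum_e p_e=1$ for SUM objectives and $\max_e p_e=1$ for MAX objectives), and $m$ tests; test $i\in[m]$ is a subset $s_i\subseteq E$. A schedule is an infinite test sequence $\sigma_1,\sigma_2,\dots\in[m]$; a stochastic schedule generates it randomly with the distribution of $\sigma_t$ possibly depending on $\sigma_1,\dots,\sigma_{t-1}$; a memoryless schedule draws each $\sigma_t$ independently from a fixed distribution $q$ on $[m]$. Detection time $T(e,t)=\mathbb{E}[1+\min\{h\ge0:e\in s_{\sigma_{t+h}}\}]$, $M_t[e]=\sup_tT(e,t)$, $E_t[e]=\lim_H\frac1H\sum_{t\le H}T(e,t)$. Valid: for every $e$, $M_t[e]<\infty$ and $E_t[e]$ exists, and for every $i$, $\lim_H\frac1H\sum_{t\le H}\Pr[\sigma_t=i]$ exists. $\mathrm{EEP}=\sum_ep_eE_t[e]$, $\mathrm{WEP}=\max_ep_eE_t[e]$. $\mathrm{opt}\text{-}\mathrm{SUM}$ and $\mathrm{opt}\text{-}\mathrm{MAX}$ are the infima of EEP and WEP over valid stochastic schedules; $\mathrm{opt}_M\text{-}\mathrm{SUM}$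 and $\mathrm{opt}_M\text{-}\mathrm{MAX}$ are the infima of EEP and WEP over valid memoryless schedules (equal to $\inf_q\sum_ep_e/Q_e$ and $\inf_q\max_ep_e/Q_e$, $Q_e=\sum_{i:e\in s_i}q_i$). *)

From HB Require Import structures.
From mathcomp Require Import all_boot all_order all_algebra.
From mathcomp Require Import all_classical all_reals all_analysis.
Set Implicit Arguments. Unset Strict Implicit. Unset Printing Implicit Defensive.
Import Order.TTheory GRing.Theory Num.Theory.
Import numFieldNormedType.Exports.
Local Open Scope classical_set_scope.
Local Open Scope ring_scope.

(* An instance: a finite type E of elements, m tests s : 'I_m -> {set E},
   weights p : E -> R.  Time is 0-based: the schedule is sigma_0, sigma_1, ... *)

(* A stochastic schedule is given by its conditional distributions:
   K h is the distribution of the next test given the history h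
   (the list of previously chosen tests, oldest first). *)
Definition is_sched (R : realType) (m : nat) (K : seq 'I_m -> 'I_m -> R) : Prop :=
  forall h : seq 'I_m, (forall i, 0 <= K h i) /\ \sum_(i < m) K h i = 1.

Definition is_memoryless (R : realType) (m : nat) (K : seq 'I_m -> 'I_m -> R) : Prop :=
  exists q : 'I_m -> R, forall h, K h = q.

Fixpoint wprob_from (R : realType) (m : nat) (K : seq 'I_m -> 'I_m -> R)
    (h w : seq 'I_m) : R :=
  match w with
  | [::] => 1
  | x :: w' => K h x * wprob_from K (rcons h x) w'
  end.

Definition wprob (R : realType) (m : nat) (K : seq 'I_m -> 'I_m -> R)
  (w : seq 'I_m) : R := wprob_from K [::] w.

(* E[1 + min(H, N)] where H = min{h >= 0 : e \in s_{sigma_{t+h}}}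
   (H = +oo if no such h); computed on the law of (sigma_0, ..., sigma_{t+N-1}). *)
Definition trunc_det (R : realType) (m : nat) (E : finType) (s : 'I_m -> {set E})
    (K : seq 'I_m -> 'I_m -> R) (e : E) (t N : nat) : R :=
  \sum_(w : (t + N).-tuple 'I_m)
     wprob K w * (1 + find (fun i => e \in s i) (drop t w))%:R.

(* Detection time T(e,t) = E[1 + H] (in [1, +oo]), by monotone convergence the
   supremum over N of the truncated expectations. *)
Definition detT (R : realType) (m : nat) (E : finType) (s : 'I_m -> {set E})
    (K : seq 'I_m -> 'I_m -> R) (e : E) (t : nat) : \bar R :=
  ereal_sup [set (trunc_det s K e t N)%:E | N in [set: nat]].

Definition detM (R : realType) (m : nat) (E : finType) (s : 'I_m -> {set E})
    (K : seq 'I_m -> 'I_m -> R) (e : E) : \bar R :=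
  ereal_sup [set detT s K e t | t in [set: nat]].

(* Cesaro averages (1/H) sum_{t < H} T(e,t) (used when T is finite) *)
Definition avgT (R : realType) (m : nat) (E : finType) (s : 'I_m -> {set E})
    (K : seq 'I_m -> 'I_m -> R) (e : E) (H : nat) : R :=
  H%:R^-1 * \sum_(t < H) fine (detT s K e t).

Definition prob_at (R : realType) (m : nat) (K : seq 'I_m -> 'I_m -> R)
    (t : nat) (i : 'I_m) : R :=
  \sum_(w : t.+1.-tuple 'I_m) wprob K w * ((tnth w ord_max == i)%:R).

Definition avg_prob (R : realType) (m : nat) (K : seq 'I_m -> 'I_m -> R)
    (i : 'I_m) (H : nat) : R :=
  H%:R^-1 * \sum_(t < H) prob_at K t i.

Definition detE (R : realType) (m : nat) (E : finType) (s : 'I_m -> {set E})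
    (K : seq 'I_m -> 'I_m -> R) (e : E) : R :=
  limn (avgT s K e).

Definition valid (R : realType) (m : nat) (E : finType) (s : 'I_m -> {set E})
    (K : seq 'I_m -> 'I_m -> R) : Prop :=
  is_sched K /\
  (forall e : E, (detM s K e < +oo)%E /\ cvgn (avgT s K e)) /\
  (forall i : 'I_m, cvgn (avg_prob K i)).

Definition EEP (R : realType) (m : nat) (E : finType) (s : 'I_m -> {set E})
    (p : E -> R) (K : seq 'I_m -> 'I_m -> R) : R :=
  \sum_(e : E) p e * detE s K e.

Definition WEP (R : realType) (m : nat) (E : finType) (s : 'I_m -> {set E})
    (p : E -> R) (K : seq 'I_m -> 'I_m -> R) : R :=
  \big[Num.max/0]_(e : E) (p e * detE s K e).

(* infima over valid stochastic / valid memoryless schedules, in \bar R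
   (+oo if no valid schedule exists) *)
Definition opt_SUM (R : realType) (m : nat) (E : finType) (s : 'I_m -> {set E})
    (p : E -> R) : \bar R :=
  ereal_inf [set (EEP s p K)%:E | K in [set K | valid s K]].

Definition opt_MAX (R : realType) (m : nat) (E : finType) (s : 'I_m -> {set E})
    (p : E -> R) : \bar R :=
  ereal_inf [set (WEP s p K)%:E | K in [set K | valid s K]].

Definition optM_SUM (R : realType) (m : nat) (E : finType) (s : 'I_m -> {set E})
    (p : E -> R) : \bar R :=
  ereal_inf [set (EEP s p K)%:E | K in [set K | valid s K /\ is_memoryless K]].

Definition optM_MAX (R : realType) (m : nat) (E : finType) (s : 'I_m -> {set E})
    (p : E -> R) : \bar R :=
  ereal_inf [set (WEP s p K)%:E | K in [set K | valid s K /\ is_memoryless K]].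

From HB Require Import structures.
From mathcomp Require Import all_boot all_order all_algebra.
From mathcomp Require Import all_classical all_reals all_analysis.
From mathcomp Require Import ring lra.
Import Order.TTheory GRing.Theory Num.Theory.
Set Implicit Arguments. Unset Strict Implicit. Unset Printing Implicit Defensive.
Import numFieldNormedType.Exports.
Local Open Scope classical_set_scope.
Local Open Scope ring_scope.

(* Let q be the limiting frequency of the tests of a valid schedule and
   Q_e = sum_{i : e \in s_i} q_i.  For every c >= 0 and every word w of length
   H, sum_{t < H} (time from t to the next occurrence of e in w) is at least
   c H - (c^2/2)(number of positions covering e) - O(1); averaging over the
   schedule and letting H -> oo gives E_t[e] >= c - c^2 Q_e / 2, and
   c = 1/Q_e yields E_t[e] >= 1/(2 Q_e).  The memoryless schedule q detects e
   in expected time at most 1/Q_e at every time step, which loses the factor 2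
   on each element, hence in both EEP and WEP. *)

Lemma sum_tuple0 (T : finType) (V : nmodType) (F : seq T -> V) :
  \sum_(w : 0.-tuple T) F w = F [::].
Proof. by rewrite (big_pred1 [tuple]) // => w /=; rewrite [w]tuple0; apply/eqP. Qed.

Lemma sum_tuple_cons (T : finType) (V : nmodType) n (F : seq T -> V) :
  \sum_(w : n.+1.-tuple T) F w = \sum_(x : T) \sum_(w : n.-tuple T) F (x :: w).
Proof.
rewrite pair_big /=.
rewrite (reindex (fun p : T * n.-tuple T => [tuple of p.1 :: p.2])) //.
exists (fun t : n.+1.-tuple T => (thead t, [tuple of behead t])).
  by move=> [x w] _; congr pair; apply: val_inj.
by move=> t _; apply: val_inj => /=; rewrite [in RHS](tuple_eta t).
Qed.

Lemma sum_find_drop_lower (R : realFieldType) (T : Type) (P : pred T)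
    (x0 : T) (c : R) : 0 <= c -> forall w : seq T,
  c * (size w)%:R - c ^+ 2 / 2 * (\sum_(t < size w) (P (nth x0 w t))%:R + 1) - 1
  <= \sum_(t < size w) (1 + find P (drop t w))%:R.
Proof.
move=> c0 w.
(* induction on w with the stronger invariant carrying the slack
   ((d - c)^2 + d) / 2, where d = 1 + find P w *)
suff : c * (size w)%:R - c ^+ 2 / 2 * (\sum_(t < size w) (P (nth x0 w t))%:R + 1)
    - 1 + (((find P w).+1%:R - c) ^+ 2 / 2 + (find P w).+1%:R / 2)
  <= \sum_(t < size w) (1 + find P (drop t w))%:R.
  have : 0 <= ((find P w).+1%:R - c) ^+ 2 / 2 + (find P w).+1%:R / 2 :> R.
    by rewrite addr_ge0 ?divr_ge0 ?sqr_ge0 ?ler0n.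
  lra.
elim: w => [|x w IH]; first by rewrite /= !big_ord0; lra.
rewrite /= !big_ord_recl /=.
move: IH; set d := (find P w).+1%:R.
have d0 : 0 <= d by rewrite ler0n.
have -> : (size w).+1%:R = (size w)%:R + 1 :> R by rewrite -addn1 natrD.
case: (P x) => /= IH.
  have : 0 <= (d - c) ^+ 2 by apply: sqr_ge0.
  have -> : (1 - c) ^+ 2 = 1 - 2 * c + c ^+ 2 :> R by ring.
  rewrite addn0; lra.
have -> : (1 + (find P w).+1)%:R = d + 1 :> R by rewrite add1n -addn1 natrD.
have -> : (d + 1 - c) ^+ 2 = (d - c) ^+ 2 + 2 * (d - c) + 1 by ring.
lra.
Qed.

Lemma cesaro_const (R : numFieldType) (c : R) (H : nat) : (0 < H)%N ->
  H%:R^-1 * \sum_(t < H) c = c.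
Proof.
move=> H0; rewrite sumr_const card_ord -[c *+ H]mulr_natr mulrCA mulVf ?mulr1 //.
by rewrite pnatr_eq0 -lt0n.
Qed.

Lemma inv_le_2harmonic (R : realFieldType) (H : nat) : (0 < H)%N ->
  H%:R^-1 <= 2 * harmonic H :> R.
Proof.
move=> H0; rewrite /harmonic /= -[H.+1]addn1 natrD.
have H1 : 1 <= H%:R :> R by rewrite ler1n.
rewrite (_ : 2 * (H%:R + 1)^-1 = ((H%:R + 1) / 2)^-1).
  by rewrite lef_pV2 ?posrE; lra.
by field; lra.
Qed.

Lemma cvgn_sum (R : realType) (I : finType) (u : I -> nat -> R) (a : I -> R) :
  (forall i, u i n @[n --> \oo] --> a i) -> \sum_i u i n @[n --> \oo] --> \sum_i a i.
Proof.
by move=> u_cvg; apply: cvg_big => [|i _]; [apply: add_continuous | apply: u_cvg].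
Qed.

Lemma fine_ge (R : numDomainType) (x : R) (y : \bar R) :
  (x%:E <= y)%E -> (y < +oo)%E -> x <= fine y.
Proof. by case: y => [r| |] //=; rewrite lee_fin. Qed.

(* A may be empty, in which case ereal_inf A = +oo. *)
Lemma ereal_inf_le_2mul (R : realType) (A B : set (\bar R)) :
  (forall x, A x -> exists r : R, x = r%:E) ->
  (forall x, A x -> (ereal_inf B <= 2%:E * x)%E) ->
  (ereal_inf B <= 2%:E * ereal_inf A)%E.
Proof.
move=> Areal AB.
have two_oo : (2%:E * +oo = +oo :> \bar R)%E by rewrite mulr_infty gtr0_sg // mul1e.
have [[x Ax]|A0] := pselect (exists x, A x); last first.
  suff -> : ereal_inf A = +oo%E by rewrite two_oo leey.
  by apply/ereal_inf_pinfty => y Ay; exfalso; apply: A0; exists y.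
case Binf: (ereal_inf B) => [r| |]; last by rewrite leNye.
- have : ((r / 2)%:E <= ereal_inf A)%E.
    apply: le_ereal_inf_tmp => y Ay; have := AB y Ay.
    by have [z ->] := Areal y Ay; rewrite Binf -EFinM !lee_fin; lra.
  case: (ereal_inf A) => [a| |]; first by rewrite -EFinM !lee_fin; lra.
    by move=> _; rewrite two_oo leey.
  by rewrite leeNy_eq.
- have := AB x Ax; rewrite Binf; have [r ->] := Areal x Ax.
  by rewrite -EFinM leye_eq.
Qed.

Section Schedules.
Variables (R : realType) (m : nat).
Local Notation T := 'I_m.
Implicit Types (K : seq T -> T -> R) (q : T -> R).
Variables (E : finType) (s : T -> {set E}).

Definition coverage q (e : E) : R := \sum_i (e \in s i)%:R * q i.

Section Schedule.
Variables (K : seq T -> T -> R) (K_sched : is_sched K).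

Lemma wprob_from_ge0 h w : 0 <= wprob_from K h w.
Proof.
elim: w h => [|x w IH] h /=; first exact: ler01.
by rewrite mulr_ge0 //; case: (K_sched h).
Qed.

Lemma sum_wprob_from k h : \sum_(w : k.-tuple T) wprob_from K h w = 1.
Proof.
elim: k h => [|k IH] h; first by rewrite (sum_tuple0 (wprob_from K h)).
rewrite (sum_tuple_cons _ (wprob_from K h)) /=.
under eq_bigr => x _ do rewrite -mulr_sumr IH mulr1.
by case: (K_sched h).
Qed.

Lemma sum_wprob_from_take n k h (G : seq T -> R) :
  \sum_(w : (n + k).-tuple T) wprob_from K h w * G (take n w) =
  \sum_(w : n.-tuple T) wprob_from K h w * G w.
Proof.
elim: n h G => [|n IH] h G.
  under eq_bigr => w _ do rewrite take0.
  rewrite -mulr_suml sum_wprob_from mul1r.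
  by rewrite (sum_tuple0 (fun w => wprob_from K h w * G w)) /= mul1r.
rewrite addSn (sum_tuple_cons _ (fun w => wprob_from K h w * G (take n.+1 w))).
rewrite (sum_tuple_cons _ (fun w => wprob_from K h w * G w)) /=.
apply: eq_bigr => x _.
under eq_bigr => w _ do rewrite -mulrA.
rewrite -mulr_sumr (IH _ (fun w => G (x :: w))) mulr_sumr.
by apply: eq_bigr => w _; rewrite mulrA.
Qed.

Lemma sum_wprob_take n L (G : seq T -> R) : (n <= L)%N ->
  \sum_(w : L.-tuple T) wprob K w * G (take n w) =
  \sum_(w : n.-tuple T) wprob K w * G w.
Proof. by move=> nL; rewrite -(subnKC nL); apply: sum_wprob_from_take. Qed.

Lemma trunc_detE e t H : (t <= H)%N ->
  trunc_det s K e t (H - t) =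
  \sum_(w : H.-tuple T) wprob K w * (1 + find (fun i => e \in s i) (drop t w))%:R.
Proof.
move=> tH; rewrite /trunc_det.
rewrite -(sum_wprob_take (fun w => (1 + find (fun i => e \in s i) (drop t w))%:R)
  (_ : t + (H - t) <= H)%N) ?subnKC //.
by apply: eq_bigr => w _; rewrite take_oversize // size_tuple.
Qed.

Lemma prob_atE t H i : (t < H)%N ->
  prob_at K t i = \sum_(w : H.-tuple T) wprob K w * (nth i w t == i)%:R.
Proof.
move=> tH; rewrite /prob_at; under eq_bigr => w _ do rewrite (tnth_nth i) /=.
rewrite -(sum_wprob_take (fun w => (nth i w t == i)%:R) tH).
by apply: eq_bigr => w _; rewrite nth_take.
Qed.

Lemma prob_at_ge0 t i : 0 <= prob_at K t i.
Proof. by apply: sumr_ge0 => w _; rewrite mulr_ge0 ?ler0n ?wprob_from_ge0. Qed.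

Lemma sum_prob_at t : \sum_i prob_at K t i = 1.
Proof.
rewrite /prob_at exchange_big /= -[RHS](sum_wprob_from t.+1 [::]).
apply: eq_bigr => w _; rewrite -mulr_sumr (bigD1 (tnth w ord_max)) //= eqxx.
by rewrite big1 ?addr0 ?mulr1 // => j /negbTE; rewrite eq_sym => ->.
Qed.

Lemma avg_prob_ge0 i H : 0 <= avg_prob K i H.
Proof.
by rewrite mulr_ge0 ?invr_ge0 ?ler0n // sumr_ge0 // => t _; apply: prob_at_ge0.
Qed.

Lemma sum_avg_prob H : (0 < H)%N -> \sum_i avg_prob K i H = 1.
Proof.
move=> H0; rewrite /avg_prob -mulr_sumr exchange_big /=.
by under eq_bigr => t _ do rewrite sum_prob_at; rewrite cesaro_const.
Qed.

Lemma expected_hits e H (i0 : T) : (0 < H)%N ->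
  \sum_(w : H.-tuple T) wprob K w * (\sum_(t < H) (e \in s (nth i0 w t))%:R) =
  H%:R * coverage (avg_prob K ^~ H) e.
Proof.
move=> H0; under eq_bigr => w _ do rewrite mulr_sumr.
rewrite exchange_big /=.
have hits_at (t : 'I_H) :
    \sum_(w : H.-tuple T) wprob K w * (e \in s (nth i0 w t))%:R
    = \sum_i (e \in s i)%:R * prob_at K t i.
  under [RHS]eq_bigr => i _ do rewrite (prob_atE _ (ltn_ord t)) mulr_sumr.
  rewrite exchange_big /=; apply: eq_bigr => w _.
  rewrite (bigD1 (nth i0 w t)) //= big1 ?addr0 => [|j].
    by rewrite (set_nth_default i0) ?size_tuple // eqxx mulr1 mulrC.
  rewrite (set_nth_default i0) ?size_tuple //.
  by rewrite eq_sym => /negbTE ->; rewrite !mulr0.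
rewrite (eq_bigr _ (fun t _ => hits_at t)) exchange_big /= mulr_sumr.
apply: eq_bigr => i _; rewrite -mulr_sumr /avg_prob mulrCA mulVKf //.
by rewrite pnatr_eq0 -lt0n.
Qed.

End Schedule.

Definition limit_freq K (i : T) : R := limn (avg_prob K i).

Section ValidSchedule.
Variables (K : seq T -> T -> R) (K_valid : valid s K).

Let K_sched : is_sched K := K_valid.1.

Lemma limit_freq_distr :
  (forall i, 0 <= limit_freq K i) /\ \sum_i limit_freq K i = 1.
Proof.
have [_ [_ avg_cvg]] := K_valid; split.
  move=> i; apply: limr_ge; first exact: avg_cvg.
  by near=> H; apply: avg_prob_ge0.
have sum_cvg : (fun H => \sum_i avg_prob K i H) @ \oo --> \sum_i limit_freq K i.
  by apply: cvgn_sum => i; apply: avg_cvg.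
have sum_cvg1 : (fun H => \sum_i avg_prob K i H) @ \oo --> (1 : R).
  apply: cvg_near_cst; near=> H; apply: sum_avg_prob => //.
  by near: H; apply: nbhs_infty_gt.
by rewrite -(cvg_lim _ sum_cvg) ?(cvg_lim _ sum_cvg1).
Unshelve. all: by end_near.
Qed.

Lemma avgT_lower e (i0 : T) c H : 0 <= c -> (0 < H)%N ->
  c - c ^+ 2 / 2 * coverage (avg_prob K ^~ H) e - (c ^+ 2 / 2 + 1) / H%:R
  <= avgT s K e H.
Proof.
move=> c0 H0; have [_ [det_fin _]] := K_valid.
have trunc_le_detT (t : 'I_H) : trunc_det s K e t (H - t) <= fine (detT s K e t).
  apply: fine_ge; first by apply: ereal_sup_ubound; exists (H - t)%N.
  by apply: le_lt_trans (det_fin e).1; apply: ereal_sup_ubound; exists t.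
have : c * H%:R - c ^+ 2 / 2 * (H%:R * coverage (avg_prob K ^~ H) e + 1) - 1
    <= \sum_(t < H) fine (detT s K e t).
  apply: le_trans (ler_sum _ (fun t _ => trunc_le_detT t)).
  rewrite (eq_bigr _ (fun t _ => trunc_detE K_sched e (ltnW (ltn_ord t)))).
  rewrite exchange_big /=.
  apply: le_trans (_ : \sum_(w : H.-tuple T) wprob K w *
      (c * H%:R - c ^+ 2 / 2 * (\sum_(t < H) (e \in s (nth i0 w t))%:R + 1) - 1)
      <= _); last first.
    apply: ler_sum => w _; rewrite -mulr_sumr ler_wpM2l ?wprob_from_ge0 //.
    by have := sum_find_drop_lower (fun i => e \in s i) i0 c0 w; rewrite size_tuple.
  rewrite (eq_bigr (fun w : H.-tuple T => (c * H%:R - c ^+ 2 / 2 - 1) * wprob K w -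
      c ^+ 2 / 2 * (wprob K w * \sum_(t < H) (e \in s (nth i0 w t))%:R))); last first.
    by move=> w _; ring.
  rewrite sumrB -!mulr_sumr expected_hits // (sum_wprob_from K_sched H [::]).
  lra.
have Hinv : 0 <= H%:R^-1 :> R by rewrite invr_ge0 ler0n.
move=> /(ler_wpM2l Hinv); rewrite /avgT; apply: le_trans.
by rewrite le_eqVlt; apply/orP; left; apply/eqP; field; rewrite pnatr_eq0 -lt0n.
Qed.

Lemma detE_lower e (i0 : T) c : 0 <= c ->
  c - c ^+ 2 / 2 * coverage (limit_freq K) e <= detE s K e.
Proof.
move=> c0; have [_ [det_fin avg_cvg]] := K_valid.
set k := 2 * (c ^+ 2 / 2 + 1).
pose g H := c - c ^+ 2 / 2 * coverage (avg_prob K ^~ H) e - k * harmonic H.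
have : g @ \oo --> c - c ^+ 2 / 2 * coverage (limit_freq K) e - k * 0.
  apply: cvgB; last by apply: cvgMl_tmp; apply: cvg_harmonic.
  apply: cvgB; first exact: cvg_cst.
  apply: cvgMl_tmp; apply: cvgn_sum => i; apply: cvgMl_tmp; exact: avg_cvg.
rewrite mulr0 subr0 => g_cvg.
rewrite -(cvg_lim _ g_cvg) // /detE; apply: ler_lim.
- exact: cvgP g_cvg.
- exact: (det_fin e).2.
near=> H; have H0 : (0 < H)%N by near: H; apply: nbhs_infty_gt.
apply: le_trans (avgT_lower e i0 c0 H0); rewrite /g lerB // /k -mulrA mulrCA.
by rewrite ler_wpM2l ?inv_le_2harmonic // addr_ge0 ?divr_ge0 ?sqr_ge0.
Unshelve. all: by end_near.
Qed.

Lemma detE_ge_half_inv_coverage e :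
  0 < coverage (limit_freq K) e /\ (coverage (limit_freq K) e)^-1 <= 2 * detE s K e.
Proof.
(* the schedule is a distribution on the tests, so there is at least one *)
have [i0 _|T0] := pickP (fun _ : T => true); last first.
  by have := (K_sched [::]).2; rewrite big_pred0 // => /eqP; rewrite eq_sym oner_eq0.
set Q := coverage _ e.
have Q0 : 0 <= Q.
  by apply: sumr_ge0 => i _; rewrite mulr_ge0 ?ler0n ?(limit_freq_distr.1 i).
(* if Q = 0, detE would exceed every c *)
have QP : 0 < Q.
  rewrite lt_def Q0 andbT; apply/eqP => Qe.
  have := detE_lower e i0 (addr_ge0 (normr_ge0 (detE s K e)) ler01).
  by rewrite -/Q Qe mulr0 subr0; have := ler_norm (detE s K e); lra.
have Qinv : 0 <= Q^-1 by rewrite invr_ge0.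
split => //; have := detE_lower e i0 Qinv; rewrite -/Q.
have -> : Q^-1 - Q^-1 ^+ 2 / 2 * Q = Q^-1 / 2 by field; rewrite gt_eqF.
lra.
Qed.

End ValidSchedule.

Definition memoryless_sched q : seq T -> T -> R := fun=> q.

Section Memoryless.
Variables (q : T -> R) (q_ge0 : forall i, 0 <= q i) (q_sum1 : \sum_i q i = 1).

Local Notation Kq := (memoryless_sched q).

Lemma memoryless_sched_is_sched : is_sched Kq.
Proof. by []. Qed.

Lemma wprob_from_memoryless h w : wprob_from Kq h w = \prod_(x <- w) q x.
Proof. by elim: w h => [|x w IH] h /=; rewrite ?big_nil ?big_cons ?IH. Qed.

Lemma sum_prod_memoryless N : \sum_(w : N.-tuple T) \prod_(x <- w) q x = 1.
Proof.
rewrite -[RHS](sum_wprob_from memoryless_sched_is_sched N [::]).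
by apply: eq_bigr => w _; rewrite wprob_from_memoryless.
Qed.

Lemma sum_prod_memoryless_drop t N (G : seq T -> R) :
  \sum_(w : (t + N).-tuple T) \prod_(x <- w) q x * G (drop t w) =
  \sum_(w : N.-tuple T) \prod_(x <- w) q x * G w.
Proof.
elim: t G => [|t IH] G; first by apply: eq_bigr => w _; rewrite drop0.
rewrite addSn (sum_tuple_cons _ (fun w => \prod_(x <- w) q x * G (drop t.+1 w))).
under eq_bigr => x _.
  under eq_bigr => w _ do rewrite big_cons -mulrA /=.
  rewrite -mulr_sumr IH; over.
by rewrite -mulr_suml q_sum1 mul1r.
Qed.

Lemma prob_at_memoryless t i : prob_at Kq t i = q i.
Proof.
rewrite /prob_at.
under eq_bigr => w _ do
  rewrite (tnth_nth i) /= /wprob wprob_from_memoryless -[t in nth i _ t]addn0 -nth_drop.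
rewrite -[t.+1]addn1 (sum_prod_memoryless_drop t 1 (fun w => (nth i w 0 == i)%:R)).
rewrite (sum_tuple_cons _ (fun w => \prod_(x <- w) q x * (nth i w 0 == i)%:R)).
under eq_bigr => x _ do rewrite (sum_tuple0 (fun w => \prod_(y <- x :: w) q y *
  (nth i (x :: w) 0 == i)%:R)) /= big_cons big_nil mulr1.
rewrite (bigD1 i) //= eqxx mulr1 big1 ?addr0 // => j /negbTE ->.
by rewrite mulr0.
Qed.

Lemma trunc_det_memoryless e t N : trunc_det s Kq e t N =
  \sum_(w : N.-tuple T) \prod_(x <- w) q x * (1 + find (fun i => e \in s i) w)%:R.
Proof.
rewrite /trunc_det /wprob; under eq_bigr => w _ do rewrite wprob_from_memoryless.
exact: (sum_prod_memoryless_drop t N (fun w => (1 + find (fun i => e \in s i) w)%:R)).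
Qed.

Lemma coverage_le1 e : coverage q e <= 1.
Proof.
rewrite -q_sum1; apply: ler_sum => i _.
by case: (e \in s i); rewrite ?mul1r ?mul0r.
Qed.

(* Truncation of the geometric expectation: f_{N+1} = 1 + (1 - Q) f_N. *)
Lemma trunc_det_memoryless_le e N : 0 < coverage q e ->
  \sum_(w : N.-tuple T) \prod_(x <- w) q x * (1 + find (fun i => e \in s i) w)%:R
  <= (coverage q e)^-1.
Proof.
set Q := coverage q e => Q0; have Q1 : Q <= 1 by apply: coverage_le1.
elim: N => [|N IH].
  rewrite (sum_tuple0 (fun w => \prod_(x <- w) q x * (1 + find _ w)%:R)).
  by rewrite /= big_nil mul1r invf_ge1.
set f := \sum_(w : N.-tuple T) _ in IH.
rewrite (sum_tuple_cons _ (fun w => \prod_(x <- w) q x * (1 + find _ w)%:R)).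
rewrite (eq_bigr (fun x => q x + f * (q x * (e \notin s x)%:R))); last first.
  move=> x _ /=; case: (e \in s x) => /=.
    under eq_bigr => w _ do rewrite big_cons addn0 mulr1.
    by rewrite -mulr_sumr sum_prod_memoryless !mulr0 addr0 mulr1.
  under eq_bigr => w _ do rewrite big_cons -[(find _ w).+1]add1n natrD -mulrA
    mulrDr mulr1 mulrDr.
  by rewrite big_split /= -!mulr_sumr sum_prod_memoryless /f; ring.
rewrite big_split /= q_sum1 -mulr_sumr.
have -> : \sum_i q i * (e \notin s i)%:R = 1 - Q.
  rewrite -[X in X - _]q_sum1 /Q /coverage -sumrB; apply: eq_bigr => i _.
  by case: (e \in s i); rewrite /= ?mulr0 ?mulr1 ?mul1r ?mul0r ?subrr ?subr0.
apply: le_trans (_ : 1 + Q^-1 * (1 - Q) <= _).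
  by rewrite lerD2l ler_wpM2r // subr_ge0.
by rewrite le_eqVlt; apply/orP; left; apply/eqP; field; rewrite gt_eqF.
Qed.

Lemma memoryless_valid_detE_le : (forall e, 0 < coverage q e) ->
  valid s Kq /\ forall e, detE s Kq e <= (coverage q e)^-1.
Proof.
move=> Q0.
have detT_const e : exists r : R, (forall t, detT s Kq e t = r%:E) /\
    r <= (coverage q e)^-1.
  pose D := ereal_sup [set (\sum_(w : N.-tuple T) \prod_(x <- w) q x *
    (1 + find (fun i => e \in s i) w)%:R)%:E | N in [set: nat]].
  have detT_D t : detT s Kq e t = D.
    rewrite /detT /D; congr ereal_sup; congr image.
    by apply: funext => N; rewrite trunc_det_memoryless.
  have : (D <= ((coverage q e)^-1)%:E)%E.
    by apply: ge_ereal_sup => _ [N _ <-]; rewrite lee_fin trunc_det_memoryless_le.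
  have : ((\sum_(w : 0.-tuple T) \prod_(x <- w) q x *
      (1 + find (fun i => e \in s i) w)%:R)%:E <= D)%E.
    by apply: ereal_sup_ubound; exists 0%N.
  by case: D detT_D => [r| |] // detT_D _; rewrite lee_fin; exists r.
have avgT_const e r : (forall t, detT s Kq e t = r%:E) ->
    \forall H \near \oo, avgT s Kq e H = r.
  move=> detTr; near=> H; rewrite /avgT; under eq_bigr => t _ do rewrite detTr /=.
  by rewrite cesaro_const //; near: H; apply: nbhs_infty_gt.
split; last first.
  move=> e; have [r [detTr r_le]] := detT_const e.
  by rewrite /detE (lim_near_cst _ (avgT_const e r detTr)).
split; first exact: memoryless_sched_is_sched.
split => [e|i].
  have [r [detTr _]] := detT_const e.
  split; last exact: is_cvg_near_cst (avgT_const e r detTr).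
  apply: (@le_lt_trans _ _ r%:E); last exact: ltry.
  by apply: ge_ereal_sup => _ [t _ <-]; rewrite detTr.
apply: (@is_cvg_near_cst _ _ (q i)); near=> H; rewrite /avg_prob.
under eq_bigr => t _ do rewrite prob_at_memoryless.
by rewrite cesaro_const //; near: H; apply: nbhs_infty_gt.
Unshelve. all: by end_near.
Qed.

End Memoryless.

Lemma memoryless_within_factor2 (p : E -> R) : (forall e, 0 <= p e) ->
  forall K, valid s K -> exists2 K', valid s K' /\ is_memoryless K' &
  EEP s p K' <= 2 * EEP s p K /\ WEP s p K' <= 2 * WEP s p K.
Proof.
move=> p_ge0 K K_valid.
have [q_ge0 q_sum1] := limit_freq_distr K_valid.
have cover := detE_ge_half_inv_coverage K_valid.
have [Kq_valid Kq_le] := memoryless_valid_detE_le q_ge0 q_sum1 (fun e => (cover e).1).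
exists (memoryless_sched (limit_freq K)); first by split => //; exists (limit_freq K).
have pdetE_le e : p e * detE s (memoryless_sched (limit_freq K)) e
    <= 2 * (p e * detE s K e).
  by rewrite mulrCA ler_wpM2l // (le_trans (Kq_le e) (cover e).2).
have pdetE_ge0 e : 0 <= p e * detE s K e.
  rewrite mulr_ge0 //; have [Q0 Q_le] := cover e.
  have : 0 < (coverage (limit_freq K) e)^-1 by rewrite invr_gt0.
  lra.
split; first by rewrite /EEP mulr_sumr ler_sum.
have WEP_ge0 : 0 <= WEP s p K.
  by apply: (big_ind (fun x => 0 <= x)) => // x y x0 y0; rewrite le_max x0.
apply: bigmax_le; first by rewrite mulr_ge0.
by move=> e _; rewrite (le_trans (pdetE_le e)) // ler_wpM2l // le_bigmax.
Qed.

End Schedules.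

Theorem theorem3 (R : realType) (m : nat) (E : finType)
    (s : 'I_m -> {set E}) (p : E -> R) (p_ge0 : forall e, 0 <= p e) :
  (\sum_(e : E) p e = 1 ->
     (opt_SUM s p <= optM_SUM s p)%E /\ (optM_SUM s p <= 2%:E * opt_SUM s p)%E) /\
  (\big[Num.max/0]_(e : E) p e = 1 ->
     (opt_MAX s p <= optM_MAX s p)%E /\ (optM_MAX s p <= 2%:E * opt_MAX s p)%E).
Proof.
split=> _; split.
- by apply: ereal_inf_le_tmp => _ [K [K_valid _] <-]; exists K.
- apply: ereal_inf_le_2mul => [_ [K _ <-]|_ [K K_valid <-]]; first by exists (EEP s p K).
  have [K' K'_valid [EEP_le _]] := memoryless_within_factor2 p_ge0 K_valid.
  apply: le_trans (_ : (EEP s p K')%:E <= _)%E; first by apply: ereal_inf_lbound; exists K'.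
  by rewrite -EFinM lee_fin.
- by apply: ereal_inf_le_tmp => _ [K [K_valid _] <-]; exists K.
- apply: ereal_inf_le_2mul => [_ [K _ <-]|_ [K K_valid <-]]; first by exists (WEP s p K).
  have [K' K'_valid [_ WEP_le]] := memoryless_within_factor2 p_ge0 K_valid.
  apply: le_trans (_ : (WEP s p K')%:E <= _)%E; first by apply: ereal_inf_lbound; exists K'.
  by rewrite -EFinM lee_fin.
Qed.
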